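(* Let $(\mathcal{S},\widehat{\mathcal{S}},\sigma,\tau,\iota)$ be a duplicated category of sets. Then the functors $\sigma:\mathcal{S}\to\widehat{\mathcal{S}}$ and $\tau:\mathcal{S}\to\widehat{\mathcal{S}}$ are faithful.
   Context: A duplicated category of sets is a quintet $(\mathcal{S},\widehat{\mathcal{S}},\sigma,\tau,\iota)$ such that: (i) $\mathcal{S}$ and $\widehat{\mathcal{S}}$ are categories satisfying Lawvere's axioms of the Elementary Theory of the Category of Sets (ETCS), i.e. each is a well-pointed topos with a natural numbers object satisfying the axiom of choice; (ii) $\sigma:\mathcal{S}\to\widehat{\mathcal{S}}$ is a functor preserving all finite limits, the subobject classifier $2$, exponentials and natural numbers objects; (iii) $\tau:\mathcal{S}\to\widehat{\mathcal{S}}$ is a functor preserving all finite limits; (iv) $\iota:\sigma\to\tau$ is a natural transformation such that $\iota_X=\mathrm{id}_{\sigma(X)}=\mathrm{id}_{\tau(X)}$ for every finite object $X$ of $\mathcal{S}$. *)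

Set Implicit Arguments.
Unset Strict Implicit.

Record Category := {
  Ob :> Type;
  Hom : Ob -> Ob -> Type;
  idm : forall A, Hom A A;
  comp : forall A B C, Hom B C -> Hom A B -> Hom A C;
  comp_assoc : forall A B C D (h : Hom C D) (g : Hom B C) (f : Hom A B),
      comp h (comp g f) = comp (comp h g) f;
  comp_id_l : forall A B (f : Hom A B), comp (idm B) f = f;
  comp_id_r : forall A B (f : Hom A B), comp f (idm A) = f
}.

Arguments Hom {C} A B : rename.
Arguments idm {C} A : rename.
Arguments comp {C A B C0} g f : rename.

Notation "g \o' f" := (comp g f) (at level 40, left associativity).

Section Cat.
Variable C : Category.

Definition is_terminal (T : C) : Prop :=
  forall X : C, exists f : Hom X T, forall g : Hom X T, g = f.

Definition is_product (A B P : C) (p1 : Hom P A) (p2 : Hom P B) : Prop :=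
  forall (X : C) (f : Hom X A) (g : Hom X B),
    exists h : Hom X P, (p1 \o' h = f /\ p2 \o' h = g) /\
      forall h' : Hom X P, p1 \o' h' = f -> p2 \o' h' = g -> h' = h.

Definition is_equalizer (A B E : C) (f g : Hom A B) (e : Hom E A) : Prop :=
  f \o' e = g \o' e /\
  forall (X : C) (h : Hom X A), f \o' h = g \o' h ->
    exists k : Hom X E, e \o' k = h /\ forall k', e \o' k' = h -> k' = k.

Definition is_pullback (A B Z P : C) (f : Hom A Z) (g : Hom B Z)
    (p1 : Hom P A) (p2 : Hom P B) : Prop :=
  f \o' p1 = g \o' p2 /\
  forall (X : C) (a : Hom X A) (b : Hom X B), f \o' a = g \o' b ->
    exists h : Hom X P, (p1 \o' h = a /\ p2 \o' h = b) /\
      forall h', p1 \o' h' = a -> p2 \o' h' = b -> h' = h.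

Definition is_mono (A B : C) (m : Hom A B) : Prop :=
  forall (X : C) (f g : Hom X A), m \o' f = m \o' g -> f = g.

Definition is_epi (A B : C) (e : Hom A B) : Prop :=
  forall (X : C) (f g : Hom B X), f \o' e = g \o' e -> f = g.

Definition is_iso (A B : C) (f : Hom A B) : Prop :=
  exists g : Hom B A, g \o' f = idm A /\ f \o' g = idm B.

Definition has_finite_limits : Prop :=
  (exists T : C, is_terminal T) /\
  (forall A B : C, exists (P : C) (p1 : Hom P A) (p2 : Hom P B), is_product p1 p2) /\
  (forall (A B : C) (f g : Hom A B), exists (E : C) (e : Hom E A), is_equalizer f g e).

(* E (with evaluation ev : P -> B, where (P, p1, p2) is a product E x A)
   is an exponential B^A *)
Definition is_exponential (A B E P : C) (p1 : Hom P E) (p2 : Hom P A)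
    (ev : Hom P B) : Prop :=
  is_product p1 p2 /\
  forall (X Q : C) (q1 : Hom Q X) (q2 : Hom Q A), is_product q1 q2 ->
    forall h : Hom Q B,
      exists l : Hom X E,
        (forall k : Hom Q P, p1 \o' k = l \o' q1 -> p2 \o' k = q2 -> ev \o' k = h) /\
        (forall l' : Hom X E,
           (forall k : Hom Q P, p1 \o' k = l' \o' q1 -> p2 \o' k = q2 -> ev \o' k = h) ->
           l' = l).

Definition is_cartesian_closed : Prop :=
  forall A B : C, exists (E P : C) (p1 : Hom P E) (p2 : Hom P A) (ev : Hom P B),
    is_exponential p1 p2 ev.

Definition is_subobject_classifier (T Omega : C) (t : Hom T Omega) : Prop :=
  is_terminal T /\
  forall (U X : C) (m : Hom U X), is_mono m ->
    exists chi : Hom X Omega,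
      (forall u : Hom U T, is_pullback chi t m u) /\
      (forall chi' : Hom X Omega, (forall u : Hom U T, is_pullback chi' t m u) -> chi' = chi).

Definition is_topos : Prop :=
  has_finite_limits /\ is_cartesian_closed /\
  exists (T Omega : C) (t : Hom T Omega), is_subobject_classifier t.

Definition is_NNO (T N : C) (z : Hom T N) (s : Hom N N) : Prop :=
  is_terminal T /\
  forall (X : C) (x : Hom T X) (f : Hom X X),
    exists u : Hom N X, (u \o' z = x /\ u \o' s = f \o' u) /\
      forall u', u' \o' z = x -> u' \o' s = f \o' u' -> u' = u.

Definition has_NNO : Prop :=
  exists (T N : C) (z : Hom T N) (s : Hom N N), is_NNO z s.

Definition is_well_pointed : Prop :=
  (exists (X Y : C) (f g : Hom X Y), f <> g) /\
  (forall T : C, is_terminal T ->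
     forall (X Y : C) (f g : Hom X Y),
       (forall x : Hom T X, f \o' x = g \o' x) -> f = g).

Definition has_choice : Prop :=
  forall (X Y : C) (e : Hom X Y), is_epi e -> exists s : Hom Y X, e \o' s = idm Y.

Definition ETCS : Prop :=
  is_topos /\ is_well_pointed /\ has_NNO /\ has_choice.

(* finite object (Dedekind finiteness) *)
Definition is_finite_object (X : C) : Prop :=
  forall m : Hom X X, is_mono m -> is_iso m.

End Cat.

Record Functor (C D : Category) := {
  F_ob :> C -> D;
  F_hom : forall A B : C, Hom A B -> Hom (F_ob A) (F_ob B);
  F_id : forall A : C, F_hom (idm A) = idm (F_ob A);
  F_comp : forall (A B E : C) (g : Hom B E) (f : Hom A B),
      F_hom (g \o' f) = F_hom g \o' F_hom f
}.

Arguments F_hom {C D} f {A B} f0 : rename.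

Record NatTrans (C D : Category) (F G : Functor C D) := {
  nt_comp :> forall X : C, Hom (F X) (G X);
  nt_nat : forall (X Y : C) (f : Hom X Y),
      nt_comp Y \o' F_hom F f = F_hom G f \o' nt_comp X
}.

Section Func.
Variables (C D : Category) (F : Functor C D).

Definition is_faithful : Prop :=
  forall (A B : C) (f g : Hom A B), F_hom F f = F_hom F g -> f = g.

Definition preserves_finite_limits : Prop :=
  (forall T : C, is_terminal T -> is_terminal (F T)) /\
  (forall (A B P : C) (p1 : Hom P A) (p2 : Hom P B),
     is_product p1 p2 -> is_product (F_hom F p1) (F_hom F p2)) /\
  (forall (A B E : C) (f g : Hom A B) (e : Hom E A),
     is_equalizer f g e -> is_equalizer (F_hom F f) (F_hom F g) (F_hom F e)).

Definition preserves_subobject_classifier : Prop :=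
  forall (T Omega : C) (t : Hom T Omega),
    is_subobject_classifier t -> is_subobject_classifier (F_hom F t).

Definition preserves_exponentials : Prop :=
  forall (A B E P : C) (p1 : Hom P E) (p2 : Hom P A) (ev : Hom P B),
    is_exponential p1 p2 ev ->
    is_exponential (F_hom F p1) (F_hom F p2) (F_hom F ev).

Definition preserves_NNO : Prop :=
  forall (T N : C) (z : Hom T N) (s : Hom N N),
    is_NNO z s -> is_NNO (F_hom F z) (F_hom F s).

End Func.

(* [is_identity_component a] : a : Hom X Y is an identity morphism,
   i.e. X = Y and a is id_X transported along that equality *)
Definition is_identity_component (D : Category) (X Y : D) (a : Hom X Y) : Prop :=
  exists e : X = Y,
    match e in _ = Z return Hom X Z with eq_refl => idm X end = a.

Definition duplicated_category_of_sets (S Sh : Category)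
    (sigma tau : Functor S Sh) (iota : NatTrans sigma tau) : Prop :=
  ETCS S /\ ETCS Sh /\
  (preserves_finite_limits sigma /\ preserves_subobject_classifier sigma /\
   preserves_exponentials sigma /\ preserves_NNO sigma) /\
  preserves_finite_limits tau /\
  (forall X : S, is_finite_object X -> is_identity_component (iota X)).

(* A functor F preserving finite limits out of a well-pointed category is
   faithful as soon as it sends objects without global elements to objects
   without global elements: if f x <> g x at a point x, the equalizer of
   f x and g x has no points, yet F f = F g gives a map from F 1 into its
   image under F.
   For sigma this holds because an object E without points makes Omega^E
   terminal, hence F(Omega)^F(E) terminal, so if F(E) had a point all maps
   F(E) -> F(Omega) would agree and the two truth values of F(Omega) would
   coincide.  For tau it is inherited from sigma: objects without points and
   terminal objects are finite, where iota is the identity, so tau agrees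
   with sigma on them. *)

From Stdlib Require Import Classical.
Set Implicit Arguments.

Definition is_pointless {C : Category} (T E : C) : Prop := Hom T E -> False.

Definition preserves_pointless (C D : Category) (F : Functor C D) : Prop :=
  forall T E : C, is_terminal T -> is_pointless T E -> is_pointless (F T) (F E).

Section Generalities.
Variable C : Category.

Lemma terminal_hom_eq {T X : C} (f g : Hom X T) : is_terminal T -> f = g.
Proof.
  intros HT. destruct (HT X) as [h Hh].
  rewrite (Hh f), (Hh g). reflexivity.
Qed.

Lemma terminal_product {T A : C} (bang : Hom A T) :
  is_terminal T -> is_product bang (idm A).
Proof.
  intros HT X f g. exists g. split.
  - split; [apply terminal_hom_eq, HT | apply comp_id_l].
  - intros h' _ Hh'. rewrite comp_id_l in Hh'. exact Hh'.
Qed.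

Lemma terminal_finite {T : C} : is_terminal T -> is_finite_object T.
Proof.
  intros HT m _. exists (idm T). split; apply terminal_hom_eq, HT.
Qed.

Lemma equalizer_mono {A B E : C} (f g : Hom A B) (e : Hom E A) :
  is_equalizer f g e -> is_mono e.
Proof.
  intros [He Hu] X a b Hab.
  assert (Hfg : f \o' (e \o' a) = g \o' (e \o' a)).
  { rewrite !comp_assoc, He. reflexivity. }
  destruct (Hu X _ Hfg) as [k [_ Hk]].
  rewrite (Hk a eq_refl), (Hk b (eq_sym Hab)). reflexivity.
Qed.

Lemma equalizer_distinct_points_pointless {T B E : C} (x y : Hom T B)
    (e : Hom E T) :
  is_terminal T -> is_equalizer x y e -> x <> y -> is_pointless T E.
Proof.
  intros HT [He _] Hxy p. apply Hxy.
  assert (Hep : e \o' p = idm T) by apply terminal_hom_eq, HT.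
  rewrite <- (comp_id_r x), <- (comp_id_r y), <- Hep, !comp_assoc, He.
  reflexivity.
Qed.

Lemma points_eq_of_hom_subsingleton {T A B : C} :
  is_terminal T -> Hom T A -> (forall h1 h2 : Hom A B, h1 = h2) ->
  forall x y : Hom T B, x = y.
Proof.
  intros HT a Hsub x y. destruct (HT A) as [bang _].
  assert (Hid : bang \o' a = idm T) by apply terminal_hom_eq, HT.
  rewrite <- (comp_id_r x), <- (comp_id_r y), <- Hid, !comp_assoc.
  rewrite (Hsub (x \o' bang) (y \o' bang)). reflexivity.
Qed.

(* A global element of B^A is the transpose of a map A ~ T x A -> B. *)
Lemma exponential_terminal_hom_eq {T A B X P : C} (p1 : Hom P X)
    (p2 : Hom P A) (ev : Hom P B) :
  is_terminal T -> is_exponential p1 p2 ev -> is_terminal X ->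
  forall h1 h2 : Hom A B, h1 = h2.
Proof.
  intros HT [Hprod Htr] HX h1 h2. destruct (HT A) as [bang _].
  destruct (Htr T A bang (idm A) (terminal_product bang HT) h1) as [l1 [Hl1 _]].
  destruct (Htr T A bang (idm A) (terminal_product bang HT) h2) as [l2 [Hl2 _]].
  destruct (Hprod A (l1 \o' bang) (idm A)) as [k [[Hk1 Hk2] _]].
  rewrite <- (Hl1 k Hk1 Hk2). apply Hl2; [|exact Hk2].
  rewrite Hk1, (terminal_hom_eq l1 l2 HX). reflexivity.
Qed.

End Generalities.

Section WellPointed.
Variables (C : Category) (T : C).
Hypotheses (HT : is_terminal T) (Hwp : is_well_pointed C).

Lemma point_ext {X Y : C} (f g : Hom X Y) :
  (forall x : Hom T X, f \o' x = g \o' x) -> f = g.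
Proof. exact (proj2 Hwp T HT X Y f g). Qed.

Lemma separating_point {X Y : C} (f g : Hom X Y) :
  f <> g -> exists x : Hom T X, f \o' x <> g \o' x.
Proof.
  intros Hfg. apply NNPP. intros Hnone. apply Hfg, point_ext.
  intros x. apply NNPP. intros Hx. apply Hnone. exists x. exact Hx.
Qed.

Lemma pointless_hom_eq {E Y : C} (f g : Hom E Y) : is_pointless T E -> f = g.
Proof. intros Hpl. apply point_ext. intros x. destruct (Hpl x). Qed.

Lemma pointless_finite {E : C} : is_pointless T E -> is_finite_object E.
Proof.
  intros Hpl m _. exists (idm E).
  rewrite (pointless_hom_eq m (idm E) Hpl), comp_id_l. split; reflexivity.
Qed.

Lemma exponential_pointless_terminal {E B X P : C} (p1 : Hom P X)
    (p2 : Hom P E) (ev : Hom P B) :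
  is_exponential p1 p2 ev -> is_pointless T E -> Hom T B -> is_terminal X.
Proof.
  intros [Hprod Htr] Hpl b. destruct (HT E) as [bang _].
  assert (Hpoints : forall l1 l2 : Hom T X, l1 = l2).
  { intros l1 l2.
    destruct (Hprod E (l1 \o' bang) (idm E)) as [k1 [_ Hk1]].
    destruct (Hprod E (l2 \o' bang) (idm E)) as [k2 [_ Hk2]].
    destruct (Htr T E bang (idm E) (terminal_product bang HT) (ev \o' k1))
      as [l [_ Hl]].
    rewrite (Hl l1), (Hl l2); [reflexivity| |].
    - intros k Hk1' Hk2'. rewrite (Hk2 k Hk1' Hk2'). exact (pointless_hom_eq _ _ Hpl).
    - intros k Hk1' Hk2'. rewrite (Hk1 k Hk1' Hk2'). reflexivity. }
  destruct (Htr T E bang (idm E) (terminal_product bang HT) (b \o' bang))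
    as [l0 _].
  intros Z. destruct (HT Z) as [bZ _].
  exists (l0 \o' bZ). intros g. apply point_ext. intros z. apply Hpoints.
Qed.

Lemma subobject_classifier_two_points {Om : C} (t : Hom T Om) :
  has_finite_limits C -> is_subobject_classifier t ->
  exists u v : Hom T Om, u <> v.
Proof.
  intros [_ [_ Heq]] [_ Hcl].
  destruct (proj1 Hwp) as [X [Y [f [g Hfg]]]].
  destruct (Heq X Y f g) as [M [m Hm]].
  destruct (Hcl M X m (equalizer_mono Hm)) as [chi [Hchi _]].
  destruct (HT M) as [bM _]. destruct (HT X) as [bX _].
  assert (Hne : chi <> t \o' bX).
  { intros Hchi_true. destruct (Hchi bM) as [_ Hpb].
    assert (Hsq : chi \o' idm X = t \o' bX) by (rewrite comp_id_r; exact Hchi_true).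
    destruct (Hpb X (idm X) bX Hsq) as [h [[Hmh _] _]].
    apply Hfg. destruct Hm as [Hm _].
    rewrite <- (comp_id_r f), <- (comp_id_r g), <- Hmh, !comp_assoc, Hm.
    reflexivity. }
  destruct (separating_point Hne) as [x Hx].
  exists (chi \o' x), (t \o' bX \o' x). exact Hx.
Qed.

End WellPointed.

Lemma faithful_of_preserves_pointless (C D : Category) (F : Functor C D) :
  has_finite_limits C -> is_well_pointed C -> preserves_finite_limits F ->
  preserves_pointless F -> is_faithful F.
Proof.
  intros [[T HT] [_ Heq]] Hwp [_ [_ HFeq]] HFpl A B f g Hfg.
  apply (point_ext HT Hwp). intros x. apply NNPP. intros Hne.
  destruct (Heq T B (f \o' x) (g \o' x)) as [E [e He]].
  destruct (HFeq _ _ _ _ _ _ He) as [_ HFu].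
  assert (HFfg : F_hom F (f \o' x) \o' idm (F T) = F_hom F (g \o' x) \o' idm (F T)).
  { rewrite !F_comp, Hfg. reflexivity. }
  destruct (HFu _ _ HFfg) as [k _].
  exact (HFpl T E HT (equalizer_distinct_points_pointless HT He Hne) k).
Qed.

Lemma logical_functor_preserves_pointless (C D : Category) (F : Functor C D) :
  ETCS C -> has_finite_limits D -> is_well_pointed D ->
  preserves_finite_limits F -> preserves_subobject_classifier F ->
  preserves_exponentials F -> preserves_pointless F.
Proof.
  intros [[_ [Hcc [T0 [Om [t Hcl]]]]] [Hwp _]] HlD HwpD [HFterm _] HFcl HFexp
    T E HT Hpl q.
  destruct (Hcc E Om) as [X [P [p1 [p2 [ev Hexp]]]]].
  destruct (proj1 Hcl T) as [bT _].
  pose proof (exponential_pointless_terminal HT Hwp Hexp Hpl (t \o' bT)) as HX.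
  pose proof (HFcl _ _ _ Hcl) as HFcl'. pose proof HFcl' as [HFT0 _].
  pose proof (exponential_terminal_hom_eq HFT0 (HFexp _ _ _ _ _ _ _ Hexp)
                (HFterm X HX)) as Hsub.
  destruct (subobject_classifier_two_points HFT0 HwpD HlD HFcl') as [u [v Huv]].
  destruct (HFterm T HT (F T0)) as [c _].
  exact (Huv (points_eq_of_hom_subsingleton HFT0 (q \o' c) Hsub u v)).
Qed.

Lemma identity_components_preserves_pointless (C D : Category)
    (sigma tau : Functor C D) (iota : NatTrans sigma tau) :
  is_well_pointed C ->
  (forall X : C, is_finite_object X -> is_identity_component (iota X)) ->
  preserves_pointless sigma -> preserves_pointless tau.
Proof.
  intros Hwp Hiota Hsigma T E HT Hpl q.
  destruct (Hiota E (pointless_finite HT Hwp Hpl)) as [eE _].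
  destruct (Hiota T (terminal_finite HT)) as [eT _].
  rewrite <- eE, <- eT in q.
  exact (Hsigma T E HT Hpl q).
Qed.

Theorem mainTheorem1 (S Sh : Category) (sigma tau : Functor S Sh)
    (iota : NatTrans sigma tau) :
  duplicated_category_of_sets iota ->
  is_faithful sigma /\ is_faithful tau.
Proof.
  intros [HS [HSh [[Hsl [Hscl [Hsexp _]]] [Htl Hiota]]]].
  pose proof HS as [[HlS _] [HwpS _]].
  pose proof HSh as [[HlSh _] [HwpSh _]].
  assert (Hsigma : preserves_pointless sigma)
    by exact (logical_functor_preserves_pointless HS HlSh HwpSh Hsl Hscl Hsexp).
  split.
  - exact (faithful_of_preserves_pointless HlS HwpS Hsl Hsigma).
  - exact (faithful_of_preserves_pointless HlS HwpS Htl
             (identity_components_preserves_pointless iota HwpS Hiota Hsigma)).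
Qed.
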